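(* Let $\mathcal{E}$ be an extensive category with finite limits and suppose that the full inclusion $\mathrm{Dec}\,\mathcal{E} \to \mathcal{E}$ has a left adjoint $L : \mathcal{E} \to \mathrm{Dec}\,\mathcal{E}$. Then $L$ preserves finite products if and only if $L$ preserves pullbacks over decidable objects (equivalently, the adjunction between $L$ and the inclusion has stable units).
   Context: A category with finite coproducts is extensive if for all objects $X,Y$ the canonical functor $\mathcal{E}/X \times \mathcal{E}/Y \to \mathcal{E}/(X+Y)$ is an equivalence. A map $X\to Z$ is a summand if there is $Y \to Z$ with $X \to Z \leftarrow Y$ a coproduct. An object $X$ of an extensive category with finite products is decidable if its diagonal $X \to X\times X$ is a summand; $\mathrm{Dec}\,\mathcal{E}$ denotes the full subcategory of decidable objects (it is closed under finite products, finite coproducts and subobjects, and is extensive). An adjunction $L \dashv R$ with $R:\mathcal{B}\to\mathcal{E}$ fully faithful has stable units if $L$ preserves pullbacks over objects of the form $RB$, $B\in\mathcal{B}$. *)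

Set Implicit Arguments.
Unset Strict Implicit.

Record Category := {
  ob :> Type;
  hom : ob -> ob -> Type;
  idm : forall a, hom a a;
  comp : forall a b c, hom b c -> hom a b -> hom a c;
  comp_id_l : forall a b (f : hom a b), comp (idm b) f = f;
  comp_id_r : forall a b (f : hom a b), comp f (idm a) = f;
  comp_assoc : forall a b c d (f : hom a b) (g : hom b c) (h : hom c d),
      comp h (comp g f) = comp (comp h g) f
}.
Arguments hom {c0} a b.
Arguments idm {c0} a.
Arguments comp {c0 a b c} g f.
Notation "g \o f" := (comp g f) (at level 40, left associativity).

Section Limits.
Variable C : Category.

(* With S := fun _ => True these are the usual notions in C; with S the
   predicate defining a full subcategory (and apex/vertices in S) they are
   the corresponding notions in that full subcategory. *)

Definition is_terminal_in (S : C -> Prop) (t : C) : Prop :=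
  forall x, S x -> exists! f : hom x t, True.

Definition is_initial (i : C) : Prop :=
  forall x, exists! f : hom i x, True.

Definition is_product_in (S : C -> Prop) (a b p : C)
  (p1 : hom p a) (p2 : hom p b) : Prop :=
  forall x, S x -> forall (f : hom x a) (g : hom x b),
    exists! h : hom x p, p1 \o h = f /\ p2 \o h = g.

Definition is_coproduct (a b s : C) (i1 : hom a s) (i2 : hom b s) : Prop :=
  forall x (f : hom a x) (g : hom b x),
    exists! h : hom s x, h \o i1 = f /\ h \o i2 = g.

Definition is_pullback_in (S : C -> Prop) (a b z p : C)
  (f : hom a z) (g : hom b z) (p1 : hom p a) (p2 : hom p b) : Prop :=
  f \o p1 = g \o p2 /\
  forall x, S x -> forall (h : hom x a) (k : hom x b), f \o h = g \o k ->
    exists! u : hom x p, p1 \o u = h /\ p2 \o u = k.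

Definition is_equalizer (a b e : C) (f g : hom a b) (m : hom e a) : Prop :=
  f \o m = g \o m /\
  forall x (h : hom x a), f \o h = g \o h -> exists! u : hom x e, m \o u = h.

Definition allobj : C -> Prop := fun _ => True.

Definition has_finite_limits : Prop :=
  (exists t, is_terminal_in allobj t) /\
  (forall a b, exists p (p1 : hom p a) (p2 : hom p b), is_product_in allobj p1 p2) /\
  (forall a b (f g : hom a b), exists e (m : hom e a), is_equalizer f g m) /\
  (forall a b z (f : hom a z) (g : hom b z),
      exists p (p1 : hom p a) (p2 : hom p b), is_pullback_in allobj f g p1 p2).

Definition has_initial : Prop := exists i, is_initial i.

End Limits.

Record BinCoproducts (C : Category) := {
  cop : C -> C -> C;
  cinl : forall a b, hom a (cop a b);
  cinr : forall a b, hom b (cop a b);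
  cop_is : forall a b, is_coproduct (cinl a b) (cinr a b);
  copair : forall a b x, hom a x -> hom b x -> hom (cop a b) x;
  copair_l : forall a b x (f : hom a x) (g : hom b x), copair f g \o cinl a b = f;
  copair_r : forall a b x (f : hom a x) (g : hom b x), copair f g \o cinr a b = g
}.

Record BinProducts (C : Category) := {
  prd : C -> C -> C;
  pr1 : forall a b, hom (prd a b) a;
  pr2 : forall a b, hom (prd a b) b;
  prd_is : forall a b, is_product_in (@allobj C) (pr1 a b) (pr2 a b);
  pair : forall x a b, hom x a -> hom x b -> hom x (prd a b);
  pair_1 : forall x a b (f : hom x a) (g : hom x b), pr1 a b \o pair f g = f;
  pair_2 : forall x a b (f : hom x a) (g : hom x b), pr2 a b \o pair f g = g
}.

Section Extensive.
Variables (C : Category) (bc : BinCoproducts C).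

Definition slice_ob (X : C) := { A : C & hom A X }.
Definition slice_hom (X : C) (a b : slice_ob X) :=
  { u : hom (projT1 a) (projT1 b) | projT2 b \o u = projT2 a }.

Definition canon_ob (X Y : C) (a : slice_ob X) (b : slice_ob Y)
  : slice_ob (cop bc X Y) :=
  existT _ (cop bc (projT1 a) (projT1 b))
    (copair bc (cinl bc X Y \o projT2 a) (cinr bc X Y \o projT2 b)).

Definition canon_map (A B A' B' : C) (u : hom A A') (v : hom B B')
  : hom (cop bc A B) (cop bc A' B') :=
  copair bc (cinl bc A' B' \o u) (cinr bc A' B' \o v).

Definition canon_fully_faithful (X Y : C) : Prop :=
  forall (a a' : slice_ob X) (b b' : slice_ob Y)
         (w : slice_hom (canon_ob a b) (canon_ob a' b')),
    exists! uv : slice_hom a a' * slice_hom b b',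
      proj1_sig w = canon_map (proj1_sig (fst uv)) (proj1_sig (snd uv)).

Definition canon_ess_surj (X Y : C) : Prop :=
  forall z : slice_ob (cop bc X Y),
    exists (a : slice_ob X) (b : slice_ob Y)
           (h : slice_hom (canon_ob a b) z) (k : slice_hom z (canon_ob a b)),
      proj1_sig h \o proj1_sig k = idm (projT1 z) /\
      proj1_sig k \o proj1_sig h = idm (projT1 (canon_ob a b)).

Definition extensive : Prop :=
  has_initial C /\ forall X Y, canon_fully_faithful X Y /\ canon_ess_surj X Y.

End Extensive.

Section Decidable.
Variables (C : Category) (bp : BinProducts C).

Definition summand (X Z : C) (m : hom X Z) : Prop :=
  exists Y (g : hom Y Z), is_coproduct m g.

Definition decidable (X : C) : Prop :=
  summand (pair bp (idm X) (idm X)).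

End Decidable.

(* A left adjoint L to the full inclusion of the full subcategory of C given
   by the predicate S, presented by its universal arrows (units)
   eta_X : X -> L X, together with its action on morphisms (natural in X). *)
Record reflection (C : Category) (S : C -> Prop) := {
  Lob : C -> C;
  Lob_S : forall X, S (Lob X);
  eta : forall X, hom X (Lob X);
  eta_univ : forall X D (f : hom X D), S D ->
      exists! g : hom (Lob X) D, g \o eta X = f;
  Lmap : forall X Y, hom X Y -> hom (Lob X) (Lob Y);
  Lmap_nat : forall X Y (f : hom X Y), Lmap f \o eta X = eta Y \o f
}.

Section Preservation.
Variables (C : Category) (S : C -> Prop) (L : reflection S).

(* L : C -> S preserves finite products (terminal object and binary products);
   limits in the full subcategory S are tested against objects of S. *)
Definition preserves_finite_products : Prop :=
  (forall t, is_terminal_in (@allobj C) t -> is_terminal_in S (Lob L t)) /\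
  (forall a b p (p1 : hom p a) (p2 : hom p b),
      is_product_in (@allobj C) p1 p2 ->
      is_product_in S (Lmap L p1) (Lmap L p2)).

Definition stable_units : Prop :=
  forall a b z p (f : hom a z) (g : hom b z) (p1 : hom p a) (p2 : hom p b),
    S z -> is_pullback_in (@allobj C) f g p1 p2 ->
    is_pullback_in S (Lmap L f) (Lmap L g) (Lmap L p1) (Lmap L p2).

End Preservation.

(* The proof works with "complemented equalizers": a pair a, b : T -> D has
   one when T = T1 + T2 with a = b on T1 and a, b apart on T2 (they agree on
   no non-initial part of T2).  In an extensive category
   - every pair of maps into a decidable object has a complemented
     equalizer, and X is decidable as soon as pr1, pr2 : X x X -> X have
     one (its equalizer is then the diagonal);
   - the property is local on coproduct decompositions, whence decidable
     objects are closed under binary coproducts.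
   Consequently L preserves binary coproducts and apartness of maps into
   decidable objects.
   (<-) A product is a pullback over the terminal object, which is decidable.
   (->) A pullback p over a decidable z is a summand of a x b, with the
   composites to z apart on the complement; applying L, a cone from a
   decidable object into L a x L b lands in the summand L p. *)
From Stdlib Require Import Setoid.
Set Implicit Arguments.
Unset Strict Implicit.

Lemma comp_congr_l (C : Category) (a c d : C) (l r : hom a c) (k : hom c d) :
  l = r -> k \o l = k \o r.
Proof. intros ->. reflexivity. Qed.

(* Composites are kept in left-associated normal form [h \o g \o f]. *)
Ltac reassoc := repeat rewrite comp_assoc.
Ltac reassoc_in H := repeat rewrite comp_assoc in H.
Ltac simpl_id := repeat (rewrite comp_id_l || rewrite comp_id_r).

(* [chain_rewrite E] rewrites with an equation [E] between composites, also
   where its left-hand side occurs at the end of a longer left-associated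
   chain [k \o ...]. *)
Ltac chain_rewrite E :=
  let E' := fresh in
  pose proof (fun d k => @comp_congr_l _ _ _ d _ _ k E) as E';
  simpl in E'; repeat setoid_rewrite comp_assoc in E';
  reassoc; progress (repeat rewrite E; repeat rewrite E'); clear E'.

Section Basics.
Variable C : Category.

Definition isom (a b : C) (f : hom a b) : Prop :=
  exists g : hom b a, g \o f = idm a /\ f \o g = idm b.

Definition monic (a b : C) (f : hom a b) : Prop :=
  forall w (u v : hom w a), f \o u = f \o v -> u = v.

Lemma isom_id (a : C) : isom (idm a).
Proof. exists (idm a); split; apply comp_id_l. Qed.

Lemma isom_monic (a b : C) (f : hom a b) : isom f -> monic f.
Proof.
  intros [g [Hgf _]] w u v E.
  rewrite <- (comp_id_l u), <- (comp_id_l v), <- Hgf, <- !comp_assoc, E.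
  reflexivity.
Qed.

Lemma initial_uniq (i : C) : is_initial i -> forall x (f g : hom i x), f = g.
Proof.
  intros H x f g. destruct (H x) as [u [_ Hu]].
  transitivity u; [symmetry|]; apply Hu; exact I.
Qed.

Lemma initial_ex (i : C) : is_initial i -> forall x, exists f : hom i x, True.
Proof. intros H x. destruct (H x) as [u _]. eauto. Qed.

Lemma terminal_uniq (S : C -> Prop) (t x : C) :
  is_terminal_in S t -> S x -> forall f g : hom x t, f = g.
Proof.
  intros H Sx f g. destruct (H x Sx) as [u [_ Hu]].
  transitivity u; [symmetry|]; apply Hu; exact I.
Qed.

Section Coproduct.
Variables (a b s : C) (i1 : hom a s) (i2 : hom b s).
Hypothesis Hi : is_coproduct i1 i2.

Lemma coproduct_ext x (h h' : hom s x) :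
  h \o i1 = h' \o i1 -> h \o i2 = h' \o i2 -> h = h'.
Proof.
  intros E1 E2. destruct (Hi (h \o i1) (h \o i2)) as [u [_ Hu]].
  transitivity u; [symmetry|]; apply Hu; split; auto.
Qed.

Lemma coproduct_copair x (f : hom a x) (g : hom b x) :
  exists h, h \o i1 = f /\ h \o i2 = g.
Proof. destruct (Hi f g) as [u [Hu _]]. eauto. Qed.

Lemma coproduct_sym : is_coproduct i2 i1.
Proof.
  intros x f g. destruct (Hi g f) as [h [[H1 H2] Hu]].
  exists h. split; [auto|]. intros h' [E1 E2]. apply Hu; auto.
Qed.

Lemma coproduct_iso_post s' (p : hom s s') : isom p -> is_coproduct (p \o i1) (p \o i2).
Proof.
  intros [q [Hqp Hpq]] x f g.
  destruct (Hi f g) as [h [[H1 H2] Hu]].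
  exists (h \o q). split.
  - split; reassoc; chain_rewrite Hqp; simpl_id; auto.
  - intros h' [E1 E2]. reassoc_in E1. reassoc_in E2.
    assert (Eh : h = h' \o p) by (apply Hu; split; auto).
    rewrite Eh, <- comp_assoc, Hpq, comp_id_r. reflexivity.
Qed.

Lemma coproduct_iso_pre a' b' (al : hom a' a) (be : hom b' b) :
  isom al -> isom be -> is_coproduct (i1 \o al) (i2 \o be).
Proof.
  intros [al' [A1 A2]] [be' [B1 B2]] x f g.
  destruct (Hi (f \o al') (g \o be')) as [h [[H1 H2] Hu]].
  exists h. split.
  - split; reassoc; [rewrite H1|rewrite H2];
      rewrite <- comp_assoc; [rewrite A1|rewrite B1]; simpl_id; reflexivity.
  - intros h' [E1 E2]. apply Hu. split.
    + rewrite <- E1, <- !comp_assoc, A2, comp_id_r. reflexivity.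
    + rewrite <- E2, <- !comp_assoc, B2, comp_id_r. reflexivity.
Qed.

Lemma coproduct_initial_r : is_initial b -> isom i1.
Proof.
  intros Hb. destruct (initial_ex Hb a) as [o _].
  destruct (coproduct_copair (idm a) o) as [r [R1 R2]].
  exists r. split; [exact R1|].
  apply coproduct_ext.
  - rewrite <- comp_assoc, R1. simpl_id. reflexivity.
  - apply (initial_uniq Hb).
Qed.

Lemma coproduct_initial : is_initial a -> is_initial b -> is_initial s.
Proof.
  intros Ha Hb x.
  destruct (initial_ex Ha x) as [f _]. destruct (initial_ex Hb x) as [g _].
  destruct (coproduct_copair f g) as [h _].
  exists h. split; [exact I|]. intros h' _.
  apply coproduct_ext; [apply (initial_uniq Ha)|apply (initial_uniq Hb)].
Qed.

End Coproduct.

Lemma coproduct_of_iso (a b s : C) (i1 : hom a s) (i2 : hom b s) :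
  isom i1 -> is_initial b -> is_coproduct i1 i2.
Proof.
  intros [j [J1 J2]] Hb x f g. exists (f \o j). split.
  - split; [rewrite <- comp_assoc, J1, comp_id_r; reflexivity|apply (initial_uniq Hb)].
  - intros h' [E1 _]. rewrite <- E1, <- comp_assoc, J2, comp_id_r. reflexivity.
Qed.

End Basics.

Section Products.
Variables (C : Category) (bp : BinProducts C).

Lemma pair_ext (x a b : C) (h h' : hom x (prd bp a b)) :
  pr1 bp a b \o h = pr1 bp a b \o h' -> pr2 bp a b \o h = pr2 bp a b \o h' -> h = h'.
Proof.
  intros E1 E2.
  destruct (prd_is bp I (pr1 bp a b \o h) (pr2 bp a b \o h)) as [u [_ Hu]].
  transitivity u; [symmetry|]; apply Hu; auto.
Qed.

Lemma pair_comp (y x a b : C) (f : hom x a) (g : hom x b) (h : hom y x) :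
  pair bp f g \o h = pair bp (f \o h) (g \o h).
Proof. apply pair_ext; rewrite !comp_assoc, ?pair_1, ?pair_2; reflexivity. Qed.

Lemma pair_comp_inj (w x y a b : C) (f : hom x a) (g : hom x b) (f' : hom y a)
  (g' : hom y b) (u : hom w x) (e : hom w y) :
  pair bp f g \o u = pair bp f' g' \o e -> f \o u = f' \o e /\ g \o u = g' \o e.
Proof.
  rewrite !pair_comp. intro E. split.
  - apply (f_equal (comp (pr1 bp a b))) in E. rewrite !pair_1 in E. exact E.
  - apply (f_equal (comp (pr2 bp a b))) in E. rewrite !pair_2 in E. exact E.
Qed.

End Products.

Section Extensive.
Variables (C : Category) (bc : BinCoproducts C).
Hypothesis Hff : forall X Y, canon_fully_faithful bc X Y.
Hypothesis Hes : forall X Y, canon_ess_surj bc X Y.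
Variable z0 : C.
Hypothesis Hz0 : is_initial z0.

Lemma canon_map_split (X Y A B A' B' : C) (a : hom A X) (b : hom B Y)
  (a' : hom A' X) (b' : hom B' Y) (w : hom (cop bc A B) (cop bc A' B')) :
  copair bc (cinl bc X Y \o a') (cinr bc X Y \o b') \o w
    = copair bc (cinl bc X Y \o a) (cinr bc X Y \o b) ->
  exists (u : hom A A') (v : hom B B'), a' \o u = a /\ b' \o v = b /\ w = canon_map bc u v.
Proof.
  intro E.
  destruct (@Hff X Y (existT _ A a) (existT _ A' a') (existT _ B b) (existT _ B' b') (exist _ w E))
    as [[[u Hu] [v Hv]] [Hw _]].
  simpl in *. eauto.
Qed.

Lemma canon_cover (X Y T : C) (t : hom T (cop bc X Y)) :
  exists T1 (t1 : hom T1 X) T2 (t2 : hom T2 Y) (h : hom (cop bc T1 T2) T),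
    isom h /\ t \o h = copair bc (cinl bc X Y \o t1) (cinr bc X Y \o t2).
Proof.
  destruct (@Hes X Y (existT _ T t)) as [[T1 t1] [[T2 t2] [[h Hh] [[k Hk] [E1 E2]]]]].
  simpl in *. exists T1, t1, T2, t2, h. split; [exists k; split|]; assumption.
Qed.

Lemma cop_coproduct (X Y : C) : is_coproduct (cinl bc X Y) (cinr bc X Y).
Proof. exact (@cop_is C bc X Y). Qed.
Arguments cop_coproduct : clear implicits.

(* The swap
   W + W -> W + W lies over z0 + z0, hence is a sum u + v; this forces the
   two injections of W to coincide, so all maps out of W are equal. *)
Lemma initial_strict (W : C) (h : hom W z0) : is_initial W.
Proof.
  set (sw := copair bc (cinr bc W W) (cinl bc W W)).
  destruct (@canon_map_split z0 z0 W W W W h h h h sw) as [u [v [_ [_ Hsw]]]].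
  { apply (coproduct_ext (cop_coproduct W W)); unfold sw;
      rewrite <- comp_assoc; repeat (rewrite copair_l || rewrite copair_r);
      f_equal; apply (initial_uniq Hz0). }
  assert (E : cinr bc W W = cinl bc W W \o u).
  { transitivity (sw \o cinl bc W W); [unfold sw; rewrite copair_l; reflexivity|].
    rewrite Hsw. unfold canon_map. rewrite copair_l. reflexivity. }
  assert (Eu : u = idm W).
  { apply (f_equal (comp (copair bc (idm W) (idm W)))) in E.
    rewrite copair_r, comp_assoc, copair_l, comp_id_l in E. symmetry. exact E. }
  rewrite Eu, comp_id_r in E.
  assert (Hall : forall x (g1 g2 : hom W x), g1 = g2).
  { intros x g1 g2. rewrite <- (copair_l bc g1 g2), <- E, copair_r. reflexivity. }
  intro x. destruct (initial_ex Hz0 x) as [e _]. exists (e \o h). split; auto.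
Qed.

(* The chosen injections are monic and disjoint; both facts come from
   fullness of the canonical functor applied to suitable maps over X + Y. *)
Lemma cinl_monic (X Y : C) : monic (cinl bc X Y).
Proof.
  intros W p q E. destruct (initial_ex Hz0 Y) as [o _].
  destruct (@canon_map_split X Y W z0 X z0 p o (idm X) o (canon_map bc q (idm z0)))
    as [u [v [Hu [_ Hw]]]].
  { apply (coproduct_ext (cop_coproduct W z0)); unfold canon_map.
    - rewrite <- comp_assoc, !copair_l. reassoc. rewrite copair_l, comp_id_r. auto.
    - apply (initial_uniq Hz0). }
  rewrite comp_id_l in Hu. subst u.
  apply (isom_monic (coproduct_initial_r (cop_coproduct X z0) Hz0)).
  apply (f_equal (fun m => m \o cinl bc W z0)) in Hw. unfold canon_map in Hw.
  rewrite !copair_l in Hw. symmetry. exact Hw.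
Qed.

Lemma cinl_cinr_disjoint (X Y W : C) (p : hom W X) (q : hom W Y) :
  cinl bc X Y \o p = cinr bc X Y \o q -> is_initial W.
Proof.
  intro E. destruct (initial_ex Hz0 X) as [oX _]. destruct (initial_ex Hz0 Y) as [oY _].
  destruct (initial_ex Hz0 W) as [oW _].
  destruct (@canon_map_split X Y W z0 z0 W p oY oX q (cinr bc z0 W \o copair bc (idm W) oW))
    as [u _].
  { apply (coproduct_ext (cop_coproduct W z0)).
    - rewrite <- !comp_assoc, copair_l, comp_id_r, copair_l. reassoc.
      rewrite copair_r. symmetry. exact E.
    - apply (initial_uniq Hz0). }
  exact (initial_strict u).
Qed.

Lemma coproduct_chosen_iso (X1 X2 K : C) (i1 : hom X1 K) (i2 : hom X2 K) :
  is_coproduct i1 i2 ->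
  exists p : hom (cop bc X1 X2) K, isom p /\ p \o cinl bc X1 X2 = i1 /\ p \o cinr bc X1 X2 = i2.
Proof.
  intro H. destruct (coproduct_copair H (cinl bc X1 X2) (cinr bc X1 X2)) as [q [Q1 Q2]].
  exists (copair bc i1 i2). split; [|split; [apply copair_l|apply copair_r]].
  exists q. split.
  - apply (coproduct_ext (cop_coproduct X1 X2)); rewrite <- comp_assoc;
      [rewrite copair_l|rewrite copair_r]; simpl_id; auto.
  - apply (coproduct_ext H); rewrite <- comp_assoc;
      [rewrite Q1, copair_l|rewrite Q2, copair_r]; simpl_id; auto.
Qed.

Section Coproduct.
Variables (X1 X2 K : C) (i1 : hom X1 K) (i2 : hom X2 K).
Hypothesis Hi : is_coproduct i1 i2.

Lemma coproduct_monic_l : monic i1.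
Proof.
  intros W p q E. destruct (coproduct_chosen_iso Hi) as [f [Hf [F1 _]]].
  apply (@cinl_monic X1 X2). apply (isom_monic Hf). rewrite !comp_assoc, F1. exact E.
Qed.

Lemma coproduct_disjoint W (p : hom W X1) (q : hom W X2) : i1 \o p = i2 \o q -> is_initial W.
Proof.
  intros E. destruct (coproduct_chosen_iso Hi) as [f [Hf [F1 F2]]].
  apply (@cinl_cinr_disjoint X1 X2 W p q), (isom_monic Hf).
  rewrite !comp_assoc, F1, F2. exact E.
Qed.

Lemma coproduct_decompose T (t : hom T K) :
  exists T1 T2 (s1 : hom T1 T) (s2 : hom T2 T) (t1 : hom T1 X1) (t2 : hom T2 X2),
    is_coproduct s1 s2 /\ t \o s1 = i1 \o t1 /\ t \o s2 = i2 \o t2.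
Proof.
  destruct (coproduct_chosen_iso Hi) as [f [[g [G1 G2]] [F1 F2]]].
  destruct (canon_cover (g \o t)) as [T1 [t1 [T2 [t2 [h [Hh E]]]]]].
  exists T1, T2, (h \o cinl bc T1 T2), (h \o cinr bc T1 T2), t1, t2.
  assert (Et : t \o h = f \o copair bc (cinl bc X1 X2 \o t1) (cinr bc X1 X2 \o t2)).
  { rewrite <- E. reassoc. rewrite G2, comp_id_l. reflexivity. }
  split; [|split].
  - exact (coproduct_iso_post (cop_coproduct T1 T2) Hh).
  - rewrite comp_assoc, Et, <- comp_assoc, copair_l, comp_assoc, F1. reflexivity.
  - rewrite comp_assoc, Et, <- comp_assoc, copair_r, comp_assoc, F2. reflexivity.
Qed.

Lemma factor_through_summand W (x : hom W K) :
  (forall V (w : hom V W) (y : hom V X2), x \o w = i2 \o y -> is_initial V) ->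
  exists e, i1 \o e = x.
Proof.
  intros Hx.
  destruct (coproduct_decompose x) as [W1 [W2 [r1 [r2 [e1 [e2 [Hr [R1 R2]]]]]]]].
  destruct (coproduct_initial_r Hr (Hx _ _ _ R2)) as [r [_ Hr1]].
  exists (e1 \o r). rewrite comp_assoc, <- R1, <- comp_assoc, Hr1, comp_id_r. reflexivity.
Qed.

End Coproduct.

Lemma coproduct_regroup (T T1 T2 A1 B1 A2 B2 : C)
  (s1 : hom T1 T) (s2 : hom T2 T) (r1 : hom A1 T1) (r2 : hom B1 T1)
  (r1' : hom A2 T2) (r2' : hom B2 T2) :
  is_coproduct s1 s2 -> is_coproduct r1 r2 -> is_coproduct r1' r2' ->
  is_coproduct (copair bc (s1 \o r1) (s2 \o r1')) (copair bc (s1 \o r2) (s2 \o r2')).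
Proof.
  intros Hs Hr Hr' x f g.
  destruct (coproduct_copair Hr (f \o cinl bc A1 A2) (g \o cinl bc B1 B2)) as [h1 [H11 H12]].
  destruct (coproduct_copair Hr' (f \o cinr bc A1 A2) (g \o cinr bc B1 B2)) as [h2 [H21 H22]].
  destruct (coproduct_copair Hs h1 h2) as [h [Hh1 Hh2]].
  exists h. split.
  - split; apply (coproduct_ext (cop_coproduct _ _));
      rewrite <- comp_assoc, ?copair_l, ?copair_r; reassoc;
      rewrite ?Hh1, ?Hh2; assumption.
  - intros h' [E1 E2]. apply (coproduct_ext Hs).
    + rewrite Hh1. apply (coproduct_ext Hr).
      * rewrite H11, <- E1, <- comp_assoc, copair_l. reassoc. reflexivity.
      * rewrite H12, <- E2, <- comp_assoc, copair_l. reassoc. reflexivity.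
    + rewrite Hh2. apply (coproduct_ext Hr').
      * rewrite H21, <- E1, <- comp_assoc, copair_r. reassoc. reflexivity.
      * rewrite H22, <- E2, <- comp_assoc, copair_r. reassoc. reflexivity.
Qed.

Definition apart (Y D : C) (u v : hom Y D) : Prop :=
  forall W (w : hom W Y), u \o w = v \o w -> is_initial W.

Definition eq_summand (T D : C) (a b : hom T D) : Prop :=
  exists T1 T2 (s1 : hom T1 T) (s2 : hom T2 T),
    is_coproduct s1 s2 /\ a \o s1 = b \o s1 /\ apart (a \o s2) (b \o s2).

Lemma apart_coproduct (B B1 B2 D : C) (i1 : hom B1 B) (i2 : hom B2 B) (u v : hom B D) :
  is_coproduct i1 i2 -> apart (u \o i1) (v \o i1) -> apart (u \o i2) (v \o i2) -> apart u v.
Proof.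
  intros Hi Ap1 Ap2 W w E.
  destruct (coproduct_decompose Hi w) as [W1 [W2 [r1 [r2 [y1 [y2 [Hr [R1 R2]]]]]]]].
  apply (coproduct_initial Hr).
  - apply (Ap1 _ y1). rewrite <- !comp_assoc, <- R1, !comp_assoc, E. reflexivity.
  - apply (Ap2 _ y2). rewrite <- !comp_assoc, <- R2, !comp_assoc, E. reflexivity.
Qed.

Lemma apart_eq_summand (T D : C) (a b : hom T D) : apart a b -> eq_summand a b.
Proof.
  intro Ap. destruct (initial_ex Hz0 T) as [o _].
  exists z0, T, o, (idm T). split; [|split].
  - apply coproduct_sym, coproduct_of_iso; [apply isom_id|exact Hz0].
  - apply (initial_uniq Hz0).
  - intros W w E. rewrite !comp_id_r in E. exact (Ap W w E).
Qed.

Lemma eq_summand_monic (T D D' : C) (a b : hom T D) (m : hom D D') :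
  monic m -> eq_summand a b -> eq_summand (m \o a) (m \o b).
Proof.
  intros Hm [T1 [T2 [s1 [s2 [Hs [E Ap]]]]]].
  exists T1, T2, s1, s2. split; [exact Hs|split].
  - rewrite <- !comp_assoc, E. reflexivity.
  - intros W w Ew. apply (Ap W w), Hm. reassoc. exact Ew.
Qed.

Lemma eq_summand_glue (T T1 T2 D : C) (s1 : hom T1 T) (s2 : hom T2 T) (a b : hom T D) :
  is_coproduct s1 s2 -> eq_summand (a \o s1) (b \o s1) -> eq_summand (a \o s2) (b \o s2) ->
  eq_summand a b.
Proof.
  intros Hs [A1 [B1 [r1 [r2 [Hr [E1 Ap1]]]]]] [A2 [B2 [r1' [r2' [Hr' [E2 Ap2]]]]]].
  exists (cop bc A1 A2), (cop bc B1 B2),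
    (copair bc (s1 \o r1) (s2 \o r1')), (copair bc (s1 \o r2) (s2 \o r2')).
  split; [exact (coproduct_regroup Hs Hr Hr')|split].
  - apply (coproduct_ext (cop_coproduct A1 A2));
      rewrite <- !comp_assoc, ?copair_l, ?copair_r, !comp_assoc; assumption.
  - apply (apart_coproduct (cop_coproduct B1 B2));
      rewrite <- !comp_assoc, ?copair_l, ?copair_r, !comp_assoc; assumption.
Qed.

Section Decidable.
Variable bp : BinProducts C.

(* In a decidable object every pair of parallel maps has a complemented
   equalizer: pull back the decomposition of X x X into diagonal and
   complement along (a, b). *)
Lemma decidable_eq_summand (X T : C) (a b : hom T X) : decidable bp X -> eq_summand a b.
Proof.
  intros [N [n Hn]].
  destruct (coproduct_decompose Hn (pair bp a b)) as [T1 [T2 [s1 [s2 [t1 [t2 [Hs [E1 E2]]]]]]]].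
  exists T1, T2, s1, s2. split; [exact Hs|split].
  - destruct (pair_comp_inj E1) as [-> ->]. reflexivity.
  - intros W w Ew. apply (coproduct_disjoint Hn (p := a \o s2 \o w) (q := t2 \o w)).
    rewrite (comp_assoc w t2 n), <- E2, !pair_comp, !comp_id_l, Ew. reflexivity.
Qed.

(* Conversely, X is decidable as soon as the two projections of X x X have
   a complemented equalizer: that equalizer is the diagonal. *)
Lemma eq_summand_decidable (X : C) : eq_summand (pr1 bp X X) (pr2 bp X X) -> decidable bp X.
Proof.
  intros [E [E' [s1 [s2 [Hs [Es Ap]]]]]].
  set (d := pair bp (idm X) (idm X)).
  destruct (factor_through_summand Hs (x := d)) as [e He].
  { intros V w y Ew. apply (Ap V y).
    rewrite <- !comp_assoc, <- Ew, !comp_assoc. unfold d. rewrite pair_1, pair_2. reflexivity. }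
  assert (Hpe : pr1 bp X X \o s1 \o e = idm X).
  { rewrite <- comp_assoc, He. apply pair_1. }
  assert (Iso : isom e).
  { exists (pr1 bp X X \o s1). split; [exact Hpe|].
    apply (coproduct_monic_l Hs). rewrite comp_assoc, He, comp_id_r. unfold d.
    rewrite pair_comp, !comp_id_l. apply pair_ext; rewrite ?pair_1, ?pair_2; auto. }
  exists E', s2. fold d. rewrite <- He, <- (comp_id_r s2).
  exact (coproduct_iso_pre Hs Iso (isom_id E')).
Qed.

(* Two maps into X + Y, the first factoring through the decidable summand X,
   have a complemented equalizer: split T along the second map; where it
   lands in X use decidability of X, where it lands in Y the maps are apart. *)
Lemma eq_summand_into_summand (X Y K T : C) (i1 : hom X K) (i2 : hom Y K)
  (a : hom T X) (b : hom T K) :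
  is_coproduct i1 i2 -> decidable bp X -> eq_summand (i1 \o a) b.
Proof.
  intros Hi HX.
  destruct (coproduct_decompose Hi b) as [T1 [T2 [t1 [t2 [b1 [b2 [Ht [B1 B2]]]]]]]].
  apply (eq_summand_glue Ht); [rewrite B1|rewrite B2].
  - rewrite <- comp_assoc. apply (eq_summand_monic (coproduct_monic_l Hi)).
    exact (decidable_eq_summand _ _ HX).
  - apply apart_eq_summand. intros W w E.
    apply (coproduct_disjoint Hi (p := a \o t2 \o w) (q := b2 \o w)). reassoc. exact E.
Qed.

(* Decidable objects are closed under binary coproducts: split K x K along
   the first projection and apply the previous lemma on each part. *)
Lemma decidable_coproduct (X Y K : C) (i1 : hom X K) (i2 : hom Y K) :
  is_coproduct i1 i2 -> decidable bp X -> decidable bp Y -> decidable bp K.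
Proof.
  intros Hi HX HY. apply eq_summand_decidable.
  destruct (coproduct_decompose Hi (pr1 bp K K)) as [T1 [T2 [t1 [t2 [a1 [a2 [Ht [A1 A2]]]]]]]].
  apply (eq_summand_glue Ht); [rewrite A1|rewrite A2].
  - exact (eq_summand_into_summand _ _ Hi HX).
  - exact (eq_summand_into_summand _ _ (coproduct_sym Hi) HY).
Qed.

(* A terminal object is decidable: its diagonal is an isomorphism. *)
Lemma terminal_decidable (t : C) : is_terminal_in (@allobj C) t -> decidable bp t.
Proof.
  intro Ht. destruct (initial_ex Hz0 (prd bp t t)) as [o _].
  exists z0, o. apply coproduct_of_iso; [|exact Hz0].
  exists (pr1 bp t t). split; [apply pair_1|].
  apply pair_ext; apply (terminal_uniq Ht); exact I.
Qed.

Lemma pullback_summand (a b z p : C) (f : hom a z) (g : hom b z) (p1 : hom p a) (p2 : hom p b) :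
  decidable bp z -> is_pullback_in (@allobj C) f g p1 p2 ->
  exists Q (q : hom Q (prd bp a b)),
    is_coproduct (pair bp p1 p2) q /\ apart (f \o pr1 bp a b \o q) (g \o pr2 bp a b \o q).
Proof.
  intros Hz [Hcomm Hpb].
  destruct (decidable_eq_summand (f \o pr1 bp a b) (g \o pr2 bp a b) Hz)
    as [T1 [Q [s1 [q [Hs [E1 Ap]]]]]].
  exists Q, q. split; [|exact Ap].
  set (m := pair bp p1 p2).
  assert (M1 : pr1 bp a b \o m = p1) by apply pair_1.
  assert (M2 : pr2 bp a b \o m = p2) by apply pair_2.
  destruct (Hpb T1 I (pr1 bp a b \o s1) (pr2 bp a b \o s1)) as [j [[J1 J2] _]].
  { reassoc. exact E1. }
  destruct (factor_through_summand Hs (x := m)) as [e He].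
  { intros V w y Ew. apply (Ap V y). symmetry in Ew.
    chain_rewrite Ew. chain_rewrite M1. chain_rewrite M2.
    rewrite Hcomm. reflexivity. }
  assert (Iso : isom e).
  { exists j. split.
    - destruct (Hpb p I p1 p2 Hcomm) as [u [_ Hu]].
      transitivity u; [symmetry|]; apply Hu; split; rewrite ?comp_id_r; auto.
      + rewrite comp_assoc, J1, <- comp_assoc, He. exact M1.
      + rewrite comp_assoc, J2, <- comp_assoc, He. exact M2.
    - apply (coproduct_monic_l Hs). rewrite comp_assoc, He, comp_id_r.
      apply pair_ext; rewrite comp_assoc; [rewrite M1|rewrite M2]; assumption. }
  rewrite <- He, <- (comp_id_r q).
  exact (coproduct_iso_pre Hs Iso (isom_id Q)).
Qed.

Section Reflection.
Variable L : reflection (decidable bp).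

Lemma eta_ext (X D : C) (g g' : hom (Lob L X) D) :
  decidable bp D -> g \o eta L X = g' \o eta L X -> g = g'.
Proof.
  intros HD E. destruct (eta_univ L (g \o eta L X) HD) as [u [_ Hu]].
  transitivity u; [symmetry|]; apply Hu; auto.
Qed.

Lemma Lmap_comp (X Y Z : C) (f : hom X Y) (g : hom Y Z) :
  Lmap L (g \o f) = Lmap L g \o Lmap L f.
Proof.
  apply eta_ext; [apply Lob_S|].
  rewrite Lmap_nat, <- comp_assoc, Lmap_nat, !comp_assoc, Lmap_nat. reflexivity.
Qed.

Lemma eta_iso (X : C) : decidable bp X -> isom (eta L X).
Proof.
  intro HX. destruct (eta_univ L (idm X) HX) as [e [He _]].
  exists e. split; [exact He|].
  apply eta_ext; [apply Lob_S|]. rewrite <- comp_assoc, He. simpl_id. reflexivity.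
Qed.

(* L preserves binary coproducts: since L A + L B is decidable, the map
   M -> L A + L B induced by the units extends along eta M, and this
   extension inverts the comparison L A + L B -> L M. *)
Lemma reflect_coproduct (A B M : C) (i1 : hom A M) (i2 : hom B M) :
  is_coproduct i1 i2 -> is_coproduct (Lmap L i1) (Lmap L i2).
Proof.
  intros Hi.
  assert (HS : decidable bp (cop bc (Lob L A) (Lob L B))).
  { exact (decidable_coproduct (cop_coproduct (Lob L A) (Lob L B)) (Lob_S L A) (Lob_S L B)). }
  destruct (coproduct_copair Hi (cinl bc (Lob L A) (Lob L B) \o eta L A)
                                (cinr bc (Lob L A) (Lob L B) \o eta L B)) as [c [C1 C2]].
  destruct (eta_univ L c HS) as [rho [Rho _]].
  set (k := copair bc (Lmap L i1) (Lmap L i2)).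
  assert (Kc : k \o c = eta L M).
  { unfold k. apply (coproduct_ext Hi); rewrite <- comp_assoc, ?C1, ?C2, comp_assoc,
      ?copair_l, ?copair_r, Lmap_nat; reflexivity. }
  assert (Iso : isom k).
  { exists rho. split.
    - apply (coproduct_ext (cop_coproduct (Lob L A) (Lob L B))); unfold k;
        rewrite <- comp_assoc, ?copair_l, ?copair_r, comp_id_l; apply (eta_ext HS);
        rewrite <- comp_assoc, Lmap_nat, comp_assoc, Rho; auto.
    - apply eta_ext; [apply Lob_S|]. rewrite <- comp_assoc, Rho, Kc, comp_id_l. reflexivity. }
  pose proof (coproduct_iso_post (cop_coproduct (Lob L A) (Lob L B)) Iso) as Hk.
  unfold k in Hk. rewrite copair_l, copair_r in Hk. exact Hk.
Qed.

(* A summand of L Y through whose complement the unit factors is initial: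
   the classifier L Y -> L Y + L Y of the summand agrees with the second
   injection on eta Y, hence everywhere since L Y + L Y is decidable. *)
Lemma eta_dense (Y A B : C) (a : hom A (Lob L Y)) (b : hom B (Lob L Y)) (beta : hom Y B) :
  is_coproduct a b -> b \o beta = eta L Y -> is_initial A.
Proof.
  intros Hab Hb.
  assert (HS : decidable bp (cop bc (Lob L Y) (Lob L Y))).
  { exact (decidable_coproduct (cop_coproduct (Lob L Y) (Lob L Y)) (Lob_S L Y) (Lob_S L Y)). }
  destruct (coproduct_copair Hab (cinl bc (Lob L Y) (Lob L Y) \o a)
                                 (cinr bc (Lob L Y) (Lob L Y) \o b)) as [phi [P1 P2]].
  assert (Ephi : phi = cinr bc (Lob L Y) (Lob L Y)).
  { apply (eta_ext HS). rewrite <- Hb, !comp_assoc, P2. reflexivity. }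
  apply (coproduct_disjoint (cop_coproduct (Lob L Y) (Lob L Y)) (p := a) (q := a)).
  rewrite <- P1, Ephi. reflexivity.
Qed.

(* L preserves apartness of maps into a decidable object: the unit factors
   through the part of L Y where L u and L v are apart, so by density the
   complementary part (where they agree) is initial. *)
Lemma Lmap_apart (Y D : C) (u v : hom Y D) :
  decidable bp D -> apart u v -> apart (Lmap L u) (Lmap L v).
Proof.
  intros HD Ap.
  destruct (decidable_eq_summand (Lmap L u) (Lmap L v) (Lob_S L D))
    as [A [B [a [b [Hab [Ea ApB]]]]]].
  destruct (factor_through_summand (coproduct_sym Hab) (x := eta L Y)) as [beta Hbeta].
  { intros V w y Ew. apply (Ap V w), (isom_monic (eta_iso HD)).
    rewrite !comp_assoc, <- !Lmap_nat, <- !comp_assoc, Ew, !comp_assoc, Ea. reflexivity. }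
  destruct (coproduct_initial_r (coproduct_sym Hab) (eta_dense Hab Hbeta)) as [b' [_ Hbb']].
  intros W w E. apply (ApB W (b' \o w)).
  rewrite <- !comp_assoc, (comp_assoc w b' b), Hbb', comp_id_l. exact E.
Qed.

Lemma reflect_terminal (t : C) :
  is_terminal_in (@allobj C) t -> is_terminal_in (decidable bp) (Lob L t).
Proof.
  intros Ht x Hx. destruct (Ht x I) as [f _].
  exists (eta L t \o f). split; [exact I|]. intros g _.
  destruct (eta_iso (terminal_decidable Ht)) as [e [_ He]].
  rewrite <- (comp_id_l g), <- He, <- comp_assoc. f_equal.
  apply (terminal_uniq Ht); exact I.
Qed.

(* Stable units imply finite products: a product is a pullback over the
   terminal object, which is decidable. *)
Lemma stable_units_products (t : C) :
  is_terminal_in (@allobj C) t -> stable_units L -> preserves_finite_products L.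
Proof.
  intros Ht Hsu. split; [exact reflect_terminal|].
  intros a b p p1 p2 Hp.
  destruct (Ht a I) as [ta _]. destruct (Ht b I) as [tb _].
  assert (Hpb : is_pullback_in (@allobj C) ta tb p1 p2).
  { split; [apply (terminal_uniq Ht); exact I|]. intros x _ h k _. exact (Hp x I h k). }
  destruct (Hsu _ _ _ _ _ _ _ _ (terminal_decidable Ht) Hpb) as [_ Hu].
  intros x Hx f g. apply (Hu x Hx f g).
  apply (terminal_uniq (reflect_terminal Ht) Hx).
Qed.

(* Finite products imply stable units: a pullback over a decidable z is a
   summand of the product, L preserves this summand and L a x L b, and a
   cone from a decidable object lands in the image of that summand because
   on the rest the two composites to L z are apart. *)
Lemma products_stable_units : preserves_finite_products L -> stable_units L.
Proof.
  intros [_ Hprod] a b z p f g p1 p2 Hz Hpb.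
  split; [rewrite <- !Lmap_comp, (proj1 Hpb); reflexivity|].
  intros x Hx h k Ehk.
  destruct (pullback_summand Hz Hpb) as [Q [q [Hm Hap]]].
  set (m := pair bp p1 p2) in Hm.
  pose proof (reflect_coproduct Hm) as HLm.
  pose proof (Lmap_apart Hz Hap) as HLap. rewrite !Lmap_comp in HLap.
  assert (M1 : Lmap L p1 = Lmap L (pr1 bp a b) \o Lmap L m).
  { rewrite <- Lmap_comp. unfold m. rewrite pair_1. reflexivity. }
  assert (M2 : Lmap L p2 = Lmap L (pr2 bp a b) \o Lmap L m).
  { rewrite <- Lmap_comp. unfold m. rewrite pair_2. reflexivity. }
  destruct (Hprod _ _ _ _ _ (@prd_is C bp a b) x Hx h k) as [w [[W1 W2] Wu]].
  destruct (factor_through_summand HLm (x := w)) as [w' Hw'].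
  { intros V v y Ev. apply (HLap V y). symmetry in Ev.
    chain_rewrite Ev. chain_rewrite W1. chain_rewrite W2. rewrite Ehk. reflexivity. }
  exists w'. split.
  - rewrite M1, M2, <- !comp_assoc, Hw'. auto.
  - intros u [U1 U2]. apply (coproduct_monic_l HLm). rewrite Hw'. apply Wu.
    rewrite !comp_assoc, <- M1, <- M2. auto.
Qed.

End Reflection.
End Decidable.
End Extensive.

Theorem corollary2p2 (C : Category) (bc : BinCoproducts C) (bp : BinProducts C)
  (Hext : extensive bc) (Hlim : has_finite_limits C)
  (L : reflection (decidable bp)) :
  preserves_finite_products L <-> stable_units L.
Proof.
  destruct Hext as [[z0 Hz0] Hcanon].
  assert (Hff : forall X Y, canon_fully_faithful bc X Y) by (intros; apply Hcanon).
  assert (Hes : forall X Y, canon_ess_surj bc X Y) by (intros; apply Hcanon).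
  destruct Hlim as [[t Ht] _].
  split.
  - exact (products_stable_units Hff Hes Hz0 (L := L)).
  - exact (stable_units_products Hz0 (L := L) Ht).
Qed.
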